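(* Let $n \geq 2$, $m \geq 1$, and $r \in \{0,1, \dots, n-2\}$ be integers, let $\mathcal{X}_1, \dots, \mathcal{X}_m$ be vector spaces over a field $\mathbb{F}$, and for each $a \in \{1,\dots,n\}$ let $x_a = x_{a,1}\otimes\cdots\otimes x_{a,m}$ be a product vector (all $x_{a,j}\in\mathcal{X}_j$ non-zero). Suppose that: 1. For every index $j \in \{1,\dots,m\}$, $\dim \operatorname{span} \{ x_{a, j}: a \in \{1,\dots,n\}\} \geq 2$. 2. The vector $\sum_{a =1}^n x_a$ has tensor rank $r$, and for every subset $\Gamma \subset \{1,\dots,n\}$ with $r+1 \leq |\Gamma| \leq n-1$, the vector $\sum_{a \in \Gamma} x_a$ has tensor rank at least $r+1$. Then $n+r \geq m+2$.
   Context: A product vector in $\mathcal{X}_1\otimes\cdots\otimes\mathcal{X}_m$ is a vector $x_1\otimes\cdots\otimes x_m$ with all $x_j$ non-zero. The tensor rank of a non-zero vector $v$ is the smallest positive integer $r$ such that $v$ is a sum of $r$ product vectors; the tensor rank of the zero vector is $0$. *)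

From HB Require Import structures.
From mathcomp Require Import all_boot all_order all_algebra.
Set Implicit Arguments. Unset Strict Implicit. Unset Printing Implicit Defensive.
Import GRing.Theory.
Local Open Scope ring_scope.

(* Tensors in V_0 (x) ... (x) V_{m-1} (V_j vector spaces over a field F, of
   arbitrary dimension) are represented through the canonical INJECTIVE
   linear embedding into multilinear forms on the product of dual spaces:
   x_0 (x) ... (x) x_{m-1}  |->  (phi_0,...,phi_{m-1}) |-> prod_j phi_j(x_j). *)
Definition tensor (F : fieldType) (m : nat) (V : 'I_m -> lmodType F) :=
  (forall j : 'I_m, {scalar V j}) -> F.

Definition prodvec (F : fieldType) (m : nat) (V : 'I_m -> lmodType F)
  (x : forall j : 'I_m, V j) : tensor V :=
  fun phi => \prod_(j < m) phi j (x j).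

Definition sum_of_products (F : fieldType) (m : nat) (V : 'I_m -> lmodType F)
  (t : tensor V) (r : nat) : Prop :=
  exists xs : 'I_r -> forall j : 'I_m, V j,
    (forall i j, xs i j != 0) /\
    t = (fun phi => \sum_(i < r) prodvec (xs i) phi).

Definition tensor_rank_eq (F : fieldType) (m : nat) (V : 'I_m -> lmodType F)
  (t : tensor V) (r : nat) : Prop :=
  sum_of_products t r /\ forall r', sum_of_products t r' -> (r <= r')%N.

Definition tensor_rank_ge (F : fieldType) (m : nat) (V : 'I_m -> lmodType F)
  (t : tensor V) (k : nat) : Prop :=
  forall r', sum_of_products t r' -> (k <= r')%N.

Definition in_span (F : fieldType) (U : lmodType F) (n : nat)
  (y : 'I_n -> U) (u : U) : Prop :=
  exists c : 'I_n -> F, u = \sum_(a < n) c a *: y a.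

Definition span_dim_ge2 (F : fieldType) (U : lmodType F) (n : nat)
  (y : 'I_n -> U) : Prop :=
  exists u v : U, in_span y u /\ in_span y v /\
    forall c d : F, c *: u + d *: v = 0 -> c = 0 /\ d = 0.

From HB Require Import structures.
From mathcomp Require Import all_boot all_order all_algebra.
From mathcomp Require Import boolp.
From mathcomp Require classical_sets.
From mathcomp Require Import ring zify.
Set Implicit Arguments. Unset Strict Implicit. Unset Printing Implicit Defensive.
Import GRing.Theory.
Local Open Scope ring_scope.

(* Subtracting a rank-r decomposition of the full sum yields a vanishing
   combination of the n + r product vectors x_a and y_k with coefficients +1
   and -1.  No proper nonempty subfamily of it vanishes: if the x-part A and
   the y-part B of one did, the rank hypotheses would force |A| <= |B| and
   |~A| <= |~B|, i.e. n <= r.  Now take any minimal vanishing combination of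
   N product vectors with no collinear factor family, and look at the partial
   products of the first j factors.  Their span has dimension > j for every
   j <= m: if it did not grow from j to j + 1, the vectors whose j-th factor is
   parallel to a fixed one would form a vanishing subfamily.  At j = m the
   family is dependent, so m < dimension < N, i.e. N >= m + 2.  Tensors are
   handled through their values on tuples of linear functionals, which
   separate vectors by Zorn's lemma. *)

Section Hyperplane.
Variables (F : fieldType) (V : lmodType F) (v : V) (A : V -> Prop).
Hypothesis A_closed : forall (a : F) x y, A x -> A y -> A (a *: x + y).
Hypothesis A_notin : ~ A v.
Hypothesis A_cover : forall x, exists t : F, A (x - t *: v).

Definition coord_along (x : V) : F^o := projT1 (cid (A_cover x)).

Lemma coord_alongP x : A (x - coord_along x *: v).
Proof. exact: projT2 (cid (A_cover x)). Qed.

Lemma coord_along_uniq x t t' : A (x - t *: v) -> A (x - t' *: v) -> t = t'.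
Proof.
move=> At At'; apply/eqP; apply/negPn/negP => neq_tt'; apply: A_notin.
have Ad : A ((t - t') *: v).
  have := A_closed (- 1) At At'.
  by rewrite scaleN1r opprB addrA subrK scalerBl.
have := A_closed (t - t')^-1 Ad (A_closed (- 1) Ad Ad).
by rewrite scaleN1r addNr addr0 scalerA mulVf ?scale1r // subr_eq0.
Qed.

Lemma coord_along_linear : linear coord_along.
Proof.
move=> a x y; symmetry; apply: coord_along_uniq (coord_alongP _).
have := A_closed a (coord_alongP x) (coord_alongP y).
by rewrite scalerBr scalerA scalerDl opprD addrACA.
Qed.

Lemma coord_along_v : coord_along v = 1.
Proof.
symmetry; apply: coord_along_uniq (coord_alongP _).
have := A_closed (- 1) (coord_alongP v) (coord_alongP v).
by rewrite scaleN1r addNr scale1r subrr.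
Qed.

End Hyperplane.

Section Separation.
Import classical_sets.
Local Open Scope classical_set_scope.

Lemma scalar_separates (F : fieldType) (V : lmodType F) (v : V) :
  v != 0 -> exists phi : {scalar V}, phi v != 0.
Proof.
move=> v_neq0.
(* A maximal set closed under [a *: x + y] and avoiding v is a hyperplane
   supplementary to v; the coordinate along v separates. *)
pose closed (A : set V) := forall (a : F) x y, A x -> A y -> A (a *: x + y).
have [A [[A_closed A_notin] A_max]] :
    exists A, (closed A /\ ~ A v) /\ forall B, A `<` B -> ~ (closed B /\ ~ B v).
  apply: Zorn_bigcup => Fm FmP Fm_total; split.
    move=> a x y [X FmX Xx] [Y FmY Yy].
    have [XY|YX] := Fm_total _ _ FmX FmY.
      by exists Y => //; apply: (proj1 (FmP _ FmY)) => //; exact: XY.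
    by exists X => //; apply: (proj1 (FmP _ FmX)) => //; exact: YX.
  by move=> [X FmX Xv]; exact: (proj2 (FmP _ FmX)).
have A0 : A 0.
  apply: contrapT => A_n0; apply: (A_max [set 0]).
    split=> [x Ax|/(_ 0 erefl)//]; exfalso; apply: A_n0.
    by have := A_closed (- 1) _ _ Ax Ax; rewrite scaleN1r addNr.
  split=> [a x y -> ->|]; first by rewrite scaler0 addr0.
  by move=> /= v0; rewrite v0 eqxx in v_neq0.
have A_cover : forall x, exists t : F, A (x - t *: v).
  move=> x; apply: contrapT => no_t.
  pose B y := exists w c, A w /\ y = w + c *: x.
  apply: (A_max B).
    split=> [y Ay|BA]; first by exists y, 0; rewrite scale0r addr0.
    apply: no_t; exists 0; rewrite scale0r subr0.
    by apply: BA; exists 0, 1; rewrite scale1r add0r.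
  split=> [a _ _ [w1 [c1 [Aw1 ->]]] [w2 [c2 [Aw2 ->]]]|[w [c [Aw v_eq]]]].
    exists (a *: w1 + w2), (a * c1 + c2); split; first exact: A_closed.
    by rewrite scalerDr scalerA scalerDl addrACA.
  have [c0|c_neq0] := eqVneq c 0.
    by apply: A_notin; rewrite v_eq c0 scale0r addr0.
  apply: no_t; exists c^-1.
  suff -> : x - c^-1 *: v = - c^-1 *: w + 0 by exact: A_closed.
  by rewrite v_eq addr0 scalerDr scalerA mulVf // scale1r scaleNr opprD addrCA subrr addr0.
pose phi : {scalar V} := HB.pack (coord_along A_cover)
  (GRing.isLinear.Build F V F^o *%R _ (coord_along_linear A_closed A_notin A_cover)).
by exists phi; rewrite /= (coord_along_v A_closed A_notin) oner_eq0.
Qed.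

End Separation.

Section Lines.
Variables (F : fieldType) (U : lmodType F).

Definition in_line (v u : U) := exists l : F, u = l *: v.

Definition collinear (I : Type) (y : I -> U) := exists v, forall a, in_line v (y a).

Lemma in_line_scale_eq (v u w : U) (a c : F) :
  u != 0 -> a != 0 -> a *: u = c *: w -> in_line v u <-> in_line v w.
Proof.
move=> u_neq0 a_neq0 auw.
have c_neq0 : c != 0.
  apply: contra_neq u_neq0 => c0; apply: (scalerI a_neq0).
  by rewrite auw c0 !scale0r scaler0.
have u_w : u = (c / a) *: w.
  by apply: (scalerI a_neq0); rewrite auw scalerA mulrCA mulfV ?mulr1.
have w_u : w = (a / c) *: u.
  by apply: (scalerI c_neq0); rewrite -auw scalerA mulrCA mulfV ?mulr1.
split=> [[l ul]|[l wl]].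
  by exists (a / c * l); rewrite w_u ul scalerA.
by exists (c / a * l); rewrite u_w wl scalerA.
Qed.

Lemma span_dim_ge2_ncollinear (n : nat) (y : 'I_n -> U) :
  span_dim_ge2 y -> ~ collinear y.
Proof.
move=> [u [w [[cu ->] [[cw ->] indep]]]] [v0 y_v0].
have [l yl] := choice y_v0.
have sum_line (c : 'I_n -> F) : \sum_a c a *: y a = (\sum_a c a * l a) *: v0.
  by rewrite scaler_suml; apply: eq_bigr => a _; rewrite yl scalerA.
rewrite !sum_line in indep.
set lu := \sum_a cu a * l a in indep; set lw := \sum_a cw a * l a in indep.
have [_ /eqP] : lw = 0 /\ - lu = 0.
  by apply: indep; rewrite !scalerA -scalerDl mulNr (mulrC lw) subrr scale0r.
rewrite oppr_eq0 => /eqP lu0.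
have [] := indep 1 0; first by rewrite lu0 !scale0r scaler0 addr0.
by move/eqP; rewrite oner_eq0.
Qed.

Lemma ncollinear_inhabited (I : Type) (y : I -> U) : ~ collinear y -> inhabited I.
Proof. by move=> ncol; apply: contrapT => noI; apply: ncol; exists 0 => a; case: noI. Qed.

End Lines.

Section DualTuples.
Variables (F : fieldType) (m : nat) (V : 'I_m -> lmodType F).

Definition dual_tuple := forall j : 'I_m, {scalar V j}.

Lemma dual_tuple_separates (j : 'I_m) (v : V j) :
  (forall Phi : dual_tuple, Phi j v = 0) -> v = 0.
Proof.
move=> Phi_v0; apply/eqP; apply/negPn/negP => /scalar_separates [phi phi_v].
pose Phi : dual_tuple := fun i =>
  if j =P i is ReflectT e then ecast i {scalar V i} e phi else \0.
suff Phi_j : Phi j = phi by rewrite -Phi_j Phi_v0 eqxx in phi_v.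
by rewrite /Phi; case: eqP => // e; rewrite eq_axiomK.
Qed.

Lemma dual_tuple_neq0 (j : 'I_m) (v : V j) :
  v != 0 -> exists Phi : dual_tuple, Phi j v != 0.
Proof.
move=> v_neq0; apply: contrapT => no_Phi; move/eqP: v_neq0; apply.
apply: dual_tuple_separates => Phi; apply/eqP/negPn/negP => Phi_v.
by apply: no_Phi; exists Phi.
Qed.

Section Levels.
Variables (I : finType) (z : I -> forall j : 'I_m, V j).

Definition head_prod (j : nat) (a : I) (Phi : dual_tuple) : F :=
  \prod_(i < m | (i < j)%N) Phi i (z a i).

Definition tail_prod (j : nat) (a : I) (Phi : dual_tuple) : F :=
  \prod_(i < m | (j <= i)%N) Phi i (z a i).

Definition tail_determined (j : nat) (f : dual_tuple -> F) :=
  forall Phi Psi : dual_tuple,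
    (forall i : 'I_m, (j <= i)%N -> Phi i = Psi i) -> f Phi = f Psi.

Definition free_at (j : nat) (S : {set I}) := forall c : I -> F,
  (forall Phi, \sum_(b in S) c b * head_prod j b Phi = 0) ->
  forall b, b \in S -> c b = 0.

Definition spanned_at (j : nat) (S : {set I}) (a : I) := exists c : I -> F,
  forall Phi, head_prod j a Phi = \sum_(b in S) c b * head_prod j b Phi.

Definition max_free_at (j : nat) (S : {set I}) :=
  free_at j S /\ forall S', free_at j S' -> (#|S'| <= #|S|)%N.

Lemma prodvec_head_tail j a Phi :
  prodvec (z a) Phi = head_prod j a Phi * tail_prod j a Phi.
Proof.
rewrite /prodvec (bigID (fun i : 'I_m => (i < j)%N)) /=.
by congr (_ * _); apply: eq_bigl => i; rewrite -leqNgt.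
Qed.

Lemma tail_prod_determined j a : tail_determined j (tail_prod j a).
Proof. by move=> Phi Psi eq_tail; apply: eq_bigr => i /eq_tail ->. Qed.

Lemma head_prod_succ (k : 'I_m) a Phi :
  head_prod k.+1 a Phi = head_prod k a Phi * Phi k (z a k).
Proof.
rewrite /head_prod (bigD1 k) //= mulrC; congr (_ * _).
by apply: eq_bigl => i; rewrite -val_eqE ltnS ltn_neqAle andbC.
Qed.

Lemma free_at_fiberwise j S (W : I -> dual_tuple -> F) :
  free_at j S -> (forall b, tail_determined j (W b)) ->
  (forall Phi, \sum_(b in S) W b Phi * head_prod j b Phi = 0) ->
  forall b, b \in S -> forall Psi, W b Psi = 0.
Proof.
move=> freeS W_tail W_sum b bS Psi.
(* Fixing the factors from j on at Psi turns every [W b] into a constant. *)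
pose glue (Phi : dual_tuple) : dual_tuple :=
  fun i => if (i < j)%N then Phi i else Psi i.
apply: (freeS (W^~ Psi)) => // Phi; rewrite -[RHS](W_sum (glue Phi)).
apply: eq_bigr => b' _; congr (_ * _).
  by apply: W_tail => i ji; rewrite /glue ltnNge ji.
by apply: eq_bigr => i ij; rewrite /glue ij.
Qed.

Lemma exists_max_free_at j : exists S, max_free_at j S.
Proof.
pose P k := `[< exists S, free_at j S /\ #|S| = k >].
have P0 : exists k, P k.
  by exists 0%N; apply/asboolP; exists set0; rewrite cards0; split=> // c _ b; rewrite inE.
have P_le k : P k -> (k <= #|I|)%N by move=> /asboolP [S [_ <-]]; exact: max_card.
have [k /asboolP [S [freeS <-]] k_max] := ex_maxnP P0 P_le.
by exists S; split=> // S' freeS'; apply: k_max; apply/asboolP; exists S'.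
Qed.

Lemma spanned_at_mem j (S : {set I}) a : a \in S -> spanned_at j S a.
Proof.
move=> aS; exists (fun b => (b == a)%:R) => Phi.
rewrite (bigD1 a) //= eqxx mul1r big1 ?addr0 // => b /andP[_ /negbTE ->].
by rewrite mul0r.
Qed.

Lemma free_at_setU1 j (S : {set I}) a :
  free_at j S -> ~ spanned_at j S a -> free_at j (a |: S).
Proof.
move=> freeS a_nspan.
have aS : a \notin S by apply/negP => /(spanned_at_mem j).
move=> c c_sum.
have ca0 : c a = 0.
  apply/eqP; apply/negPn/negP => ca_neq0; apply: a_nspan.
  exists (fun b => - c b / c a) => Phi.
  have /eqP := c_sum Phi; rewrite big_setU1 //= addr_eq0 => /eqP caP.
  rewrite -[LHS]mul1r -(mulVf ca_neq0) -mulrA caP mulrN mulr_sumr -sumrN.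
  by apply: eq_bigr => b _; rewrite mulrA (mulrC _ (c b)) !mulNr.
have c_sumS Phi : \sum_(b in S) c b * head_prod j b Phi = 0.
  by have := c_sum Phi; rewrite big_setU1 //= ca0 mul0r add0r.
by move=> b; rewrite in_setU1 => /predU1P [-> //|]; exact: freeS c_sumS b.
Qed.

Lemma max_free_at_spans j S : max_free_at j S -> forall a, spanned_at j S a.
Proof.
move=> [freeS S_max] a; have [aS|aS] := boolP (a \in S); first exact: spanned_at_mem.
apply: contrapT => a_nspan; have := S_max _ (free_at_setU1 freeS a_nspan).
by rewrite cardsU1 aS ltnn.
Qed.

Lemma sum_prodvec_expand j (S : {set I}) (al : I -> I -> F) (s : I -> F) (A : {set I}) Phi :
  (forall a, head_prod j a Phi = \sum_(b in S) al a b * head_prod j b Phi) ->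
  \sum_(a in A) s a * prodvec (z a) Phi =
  \sum_(b in S) (\sum_(a in A) s a * al a b * tail_prod j a Phi) * head_prod j b Phi.
Proof.
move=> al_span.
under eq_bigr => a _ do rewrite (prodvec_head_tail j) al_span mulr_suml mulr_sumr.
rewrite exchange_big /=; apply: eq_bigr => b _; rewrite mulr_suml.
by apply: eq_bigr => a _; ring.
Qed.

Lemma head_succ_coef_eq (k : 'I_m) (S : {set I}) (al c : I -> I -> F) :
  free_at k S ->
  (forall a Phi, head_prod k a Phi = \sum_(b in S) al a b * head_prod k b Phi) ->
  (forall a Phi, head_prod k.+1 a Phi = \sum_(b in S) c a b * head_prod k.+1 b Phi) ->
  forall a b, b \in S -> al a b *: z a k = c a b *: z b k.
Proof.
move=> freeS al_span c_span a b bS.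
pose W b' (Phi : dual_tuple) := al a b' * Phi k (z a k) - c a b' * Phi k (z b' k).
have W_tail b' : tail_determined k (W b').
  by move=> Phi Psi eq_tail; rewrite /W (eq_tail k).
have W_sum Phi : \sum_(b' in S) W b' Phi * head_prod k b' Phi = 0.
  under eq_bigr => b' _ do rewrite mulrBl.
  rewrite sumrB; apply/eqP; rewrite subr_eq0; apply/eqP.
  transitivity (head_prod k.+1 a Phi); last first.
    by rewrite c_span; apply: eq_bigr => b' _; rewrite head_prod_succ; ring.
  by rewrite head_prod_succ al_span mulr_suml; apply: eq_bigr => b' _; ring.
apply/eqP; rewrite -subr_eq0; apply/eqP; apply: dual_tuple_separates => Psi.
by rewrite linearB !linearZ; exact: (free_at_fiberwise freeS W_tail W_sum bS).
Qed.

Lemma subsum_closed_eq0 j (S : {set I}) (al : I -> I -> F) (s : I -> F) (C : {set I}) :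
  free_at j S ->
  (forall a Phi, head_prod j a Phi = \sum_(b in S) al a b * head_prod j b Phi) ->
  (forall Phi, \sum_a s a * prodvec (z a) Phi = 0) ->
  (forall a b, b \in S -> al a b != 0 -> (a \in C) = (b \in C)) ->
  forall Phi, \sum_(a in C) s a * prodvec (z a) Phi = 0.
Proof.
move=> freeS al_span sum0 C_closed Phi.
pose W (A : {set I}) b Psi := \sum_(a in A) s a * al a b * tail_prod j a Psi.
have W_tail A b : tail_determined j (W A b).
  by move=> P1 P2 eq_tail; apply: eq_bigr => a _; rewrite (tail_prod_determined _ eq_tail).
have WT0 : forall b, b \in S -> forall Psi, W setT b Psi = 0.
  apply: (free_at_fiberwise freeS (W_tail setT)) => Psi.
  rewrite -sum_prodvec_expand // -[RHS](sum0 Psi).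
  by apply: eq_bigl => a; rewrite in_setT.
rewrite (sum_prodvec_expand _ _ (al_span^~ Phi)); apply: big1 => b bS.
rewrite -/(W C b Phi).
have [bC|bC] := boolP (b \in C).
  suff -> : W C b Phi = W setT b Phi by rewrite WT0 ?mul0r.
  rewrite /W [RHS](bigID (mem C)) /= [X in _ = _ + X]big1 ?addr0.
    by apply: eq_bigl => a; rewrite in_setT.
  move=> a /andP[_ aC]; have [->|al_neq0] := eqVneq (al a b) 0.
    by rewrite mulr0 mul0r.
  by rewrite (C_closed _ _ bS al_neq0) bC in aC.
rewrite /W big1 ?mul0r // => a aC.
have [->|al_neq0] := eqVneq (al a b) 0; first by rewrite mulr0 mul0r.
by rewrite -(C_closed _ _ bS al_neq0) aC in bC.
Qed.

Hypothesis z_neq0 : forall a j, z a j != 0.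

Lemma free_at_succ (k : 'I_m) S : free_at k S -> free_at k.+1 S.
Proof.
move=> freeS c c_sum b bS.
pose W b' (Phi : dual_tuple) := c b' * Phi k (z b' k).
have W_tail b' : tail_determined k (W b') by move=> P1 P2 eq_tail; rewrite /W (eq_tail k).
have W_sum Phi : \sum_(b' in S) W b' Phi * head_prod k b' Phi = 0.
  by rewrite -[RHS](c_sum Phi); apply: eq_bigr => b' _; rewrite head_prod_succ /W; ring.
have [Psi Psi_neq0] := dual_tuple_neq0 (z_neq0 b k).
have /eqP := free_at_fiberwise freeS W_tail W_sum bS Psi.
by rewrite mulf_eq0 (negbTE Psi_neq0) orbF => /eqP.
Qed.

Lemma exists_nspanned_at_succ (k : 'I_m) (S : {set I}) (s : I -> F) :
  max_free_at k S -> (forall Phi, \sum_a s a * prodvec (z a) Phi = 0) ->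
  (forall C : {set I}, (forall Phi, \sum_(a in C) s a * prodvec (z a) Phi = 0) ->
     C = set0 \/ C = setT) ->
  ~ collinear (fun a => z a k) ->
  exists a, ~ spanned_at k.+1 S a.
Proof.
move=> S_max sum0 minimal ncol; apply: contrapT => all_spanned.
(* Otherwise the vectors whose k-th factor is parallel to that of b0 form a
   vanishing subfamily. *)
have spanned a : spanned_at k.+1 S a by apply: contrapT => ?; apply: all_spanned; exists a.
have [c c_span] := choice spanned.
have [al al_span] := choice (max_free_at_spans S_max).
have [b0] := ncollinear_inhabited ncol.
pose C := [set a | `[< in_line (z b0 k) (z a k) >]].
have C_closed a b : b \in S -> al a b != 0 -> (a \in C) = (b \in C).
  move=> bS al_neq0; rewrite !inE; apply: asbool_equiv_eq.
  have := head_succ_coef_eq S_max.1 al_span c_span a bS.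
  exact: in_line_scale_eq (z_neq0 a k) al_neq0.
have [C0|CT] := minimal C (subsum_closed_eq0 S_max.1 al_span sum0 C_closed).
  have : b0 \in C by rewrite inE; apply/asboolP; exists 1; rewrite scale1r.
  by rewrite C0 inE.
apply: ncol; exists (z b0 k) => a; have : a \in C by rewrite CT in_setT.
by rewrite inE => /asboolP.
Qed.

Variable s : I -> F.
Hypothesis s_neq0 : forall a, s a != 0.
Hypothesis sum_eq0 : forall Phi, \sum_a s a * prodvec (z a) Phi = 0.
Hypothesis sum_minimal : forall C : {set I},
  (forall Phi, \sum_(a in C) s a * prodvec (z a) Phi = 0) -> C = set0 \/ C = setT.
Hypothesis ncollinear : forall j, ~ collinear (fun a => z a j).
Hypothesis m_gt0 : (0 < m)%N.

Lemma max_free_at_succ (k : 'I_m) S :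
  max_free_at k S -> exists S', free_at k.+1 S' /\ #|S'| = #|S|.+1.
Proof.
move=> S_max.
have [a a_nspan] := exists_nspanned_at_succ S_max sum_eq0 sum_minimal (ncollinear (j := k)).
have aS : a \notin S by apply/negP => /(spanned_at_mem k.+1).
exists (a |: S); split; last by rewrite cardsU1 aS.
exact: free_at_setU1 (free_at_succ S_max.1) a_nspan.
Qed.

Lemma exists_free_at_card_gt j : (j <= m)%N -> exists S, free_at j S /\ (j < #|S|)%N.
Proof.
elim: j => [_|j IH jm].
  have [a0] := ncollinear_inhabited (ncollinear (j := Ordinal m_gt0)).
  exists [set a0]; split; last by rewrite cards1.
  move=> c c_sum b; rewrite in_set1 => /eqP ->.
  by have := c_sum (fun=> \0); rewrite big_set1 /head_prod big_pred0 ?mulr1.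
have [S0 [freeS0 j_lt]] := IH (ltnW jm).
have [S S_max] := exists_max_free_at j.
have [S' [freeS' cardS']] := max_free_at_succ (k := Ordinal jm) S_max.
by exists S'; split; rewrite // cardS' ltnS (leq_trans j_lt) // S_max.2.
Qed.

Lemma head_prod_full a Phi : head_prod m a Phi = prodvec (z a) Phi.
Proof. by apply: eq_bigl => i; rewrite ltn_ord. Qed.

Theorem vanishing_sum_length : (m + 2 <= #|I|)%N.
Proof.
have [S [freeS m_lt]] := exists_free_at_card_gt (leqnn m).
have S_neqT : S != setT.
  apply/eqP => ST; have [a0] := ncollinear_inhabited (ncollinear (j := Ordinal m_gt0)).
  suff /eqP : s a0 = 0 by apply/negP: (s_neq0 a0).
  apply: (freeS s); last by rewrite ST in_setT.
  move=> Phi; rewrite ST -[RHS](sum_eq0 Phi).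
  by apply: eq_big => [a|a _]; rewrite ?in_setT ?head_prod_full.
have /proper_card : S \proper setT by rewrite properT.
by rewrite cardsT addn2; apply: leq_ltn_trans.
Qed.

End Levels.
End DualTuples.

Lemma exists_superset_card (T : finType) (G : {set T}) d :
  (#|G| + d <= #|T|)%N -> exists H : {set T}, G \subset H /\ #|H| = (#|G| + d)%N.
Proof.
elim: d => [|d IH] le_T; first by exists G; rewrite addn0.
have [H [GH cardH]] : exists H : {set T}, G \subset H /\ #|H| = (#|G| + d)%N.
  by apply: IH; lia.
have /card_gt0P [t] : (0 < #|~: H|)%N by have := cardsC H; lia.
rewrite inE => tH; exists (t |: H); split; first exact: subset_trans GH (subsetUr _ _).
by rewrite cardsU1 tH cardH addnS.
Qed.

Lemma preimset_sum_eq0 (A B : finType) (S : {set A + B}) :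
  inl @^-1: S = set0 -> inr @^-1: S = set0 -> S = set0.
Proof.
move=> SA SB; apply/setP => -[a|b]; rewrite inE.
  by have /setP/(_ a) := SA; rewrite !inE.
by have /setP/(_ b) := SB; rewrite !inE.
Qed.

Section SumsOfProducts.
Variables (F : fieldType) (m : nat) (V : 'I_m -> lmodType F).

Lemma sum_of_productsD (t1 t2 : tensor V) r1 r2 :
  sum_of_products t1 r1 -> sum_of_products t2 r2 ->
  sum_of_products (t1 \+ t2) (r1 + r2).
Proof.
move=> [y1 [y1_neq0 ->]] [y2 [y2_neq0 ->]].
exists (fun i => match split i with inl i1 => y1 i1 | inr i2 => y2 i2 end); split.
  by move=> i j; case: (split i).
by apply: funext => Phi; rewrite big_split_ord /=; congr (_ + _); apply: eq_bigr => i _;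
  rewrite (unsplitK (inl _ _), unsplitK (inr _ _)).
Qed.

Lemma sum_of_products_subfamily (I : finType) (y : I -> forall j : 'I_m, V j)
    (A : {set I}) :
  (forall i j, y i j != 0) ->
  sum_of_products (fun Phi => \sum_(i in A) prodvec (y i) Phi) #|A|.
Proof.
move=> y_neq0; exists (fun k => y (enum_val k)); split=> [k j|]; first exact: y_neq0.
by apply: funext => Phi; rewrite big_enum_val.
Qed.

End SumsOfProducts.

Definition sum_join (A B T : Type) (f : A -> T) (g : B -> T) (i : A + B) : T :=
  match i with inl a => f a | inr b => g b end.

Section RankDecomposition.
Variables (F : fieldType) (n m r : nat) (V : 'I_m -> lmodType F).
Variables (x : 'I_n -> forall j : 'I_m, V j) (ys : 'I_r -> forall j : 'I_m, V j).
Hypothesis n_ge2 : (2 <= n)%N.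
Hypothesis r_le : (r <= n - 2)%N.
Hypothesis x_neq0 : forall a j, x a j != 0.
Hypothesis ys_neq0 : forall k j, ys k j != 0.
Hypothesis sum_eq : forall Phi, \sum_a prodvec (x a) Phi = \sum_k prodvec (ys k) Phi.
Hypothesis rank_min : forall r',
  sum_of_products (fun Phi => \sum_a prodvec (x a) Phi) r' -> (r <= r')%N.
Hypothesis subsum_rank : forall Gamma : {set 'I_n},
  (r.+1 <= #|Gamma|)%N -> (#|Gamma| <= n - 1)%N ->
  tensor_rank_ge (fun Phi => \sum_(a in Gamma) prodvec (x a) Phi) r.+1.

Lemma subsum_card_le (G : {set 'I_n}) (H : {set 'I_r}) :
  (forall Phi, \sum_(a in G) prodvec (x a) Phi = \sum_(k in H) prodvec (ys k) Phi) ->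
  G != setT -> (#|G| <= #|H|)%N.
Proof.
move=> GH G_neqT.
have /proper_card : G \proper setT by rewrite properT.
rewrite cardsT card_ord => G_lt.
(* Pad G with further x's up to r + 1 elements, where the rank bound applies. *)
have [Ga [GGa cardGa]] : exists Ga : {set 'I_n}, G \subset Ga /\ #|Ga| = maxn #|G| r.+1.
  by rewrite maxnE; apply: exists_superset_card; rewrite card_ord; lia.
have Ga_sum : (fun Phi => \sum_(a in Ga) prodvec (x a) Phi) =
    (fun Phi => \sum_(k in H) prodvec (ys k) Phi) \+
    (fun Phi => \sum_(a in Ga :\: G) prodvec (x a) Phi).
  by apply: funext => Phi; rewrite (big_setID G) (setIidPr GGa) GH.
have := sum_of_productsD (sum_of_products_subfamily H ys_neq0)
  (sum_of_products_subfamily (Ga :\: G) x_neq0).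
have Ga_lb : (r < #|Ga|)%N by rewrite cardGa; lia.
have Ga_ub : (#|Ga| <= n - 1)%N by rewrite cardGa; lia.
rewrite -Ga_sum => /(subsum_rank Ga_lb Ga_ub); rewrite cardsDS // cardGa.
have := max_card H; rewrite card_ord; lia.
Qed.

Lemma subsum_ys_eq0 (H : {set 'I_r}) :
  (forall Phi, \sum_(k in H) prodvec (ys k) Phi = 0) -> H = set0.
Proof.
move=> H0; apply: cards0_eq.
have : sum_of_products (fun Phi => \sum_a prodvec (x a) Phi) #|~: H|.
  suff -> : (fun Phi => \sum_a prodvec (x a) Phi) =
      (fun Phi => \sum_(k in ~: H) prodvec (ys k) Phi).
    exact: sum_of_products_subfamily.
  apply: funext => Phi; rewrite sum_eq (bigID (mem H)) /= H0 add0r.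
  by apply: eq_bigl => k; rewrite inE.
move/rank_min; have := cardsC H; rewrite card_ord; lia.
Qed.

Let z : 'I_n + 'I_r -> forall j : 'I_m, V j := sum_join x ys.
Let s : 'I_n + 'I_r -> F := sum_join (fun=> 1) (fun=> -1).

Lemma sum_join_sum (P : pred ('I_n + 'I_r)) Phi :
  \sum_(i | P i) s i * prodvec (z i) Phi =
  \sum_(a | P (inl a)) prodvec (x a) Phi - \sum_(k | P (inr k)) prodvec (ys k) Phi.
Proof.
rewrite big_sumType -sumrN.
by congr (_ + _); apply: eq_bigr => i _; rewrite (mul1r, mulN1r).
Qed.

Lemma sum_join_eq0 Phi : \sum_i s i * prodvec (z i) Phi = 0.
Proof. by rewrite sum_join_sum sum_eq subrr. Qed.

Lemma sum_join_split (S : {set 'I_n + 'I_r}) :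
  (forall Phi, \sum_(i in S) s i * prodvec (z i) Phi = 0) ->
  forall Phi, \sum_(a in inl @^-1: S) prodvec (x a) Phi =
              \sum_(k in inr @^-1: S) prodvec (ys k) Phi.
Proof.
move=> S0 Phi; apply/eqP; rewrite -subr_eq0; apply/eqP.
rewrite -[RHS](S0 Phi) sum_join_sum.
by congr (_ - _); apply: eq_bigl => i; rewrite inE.
Qed.

Lemma sum_join_minimal (S : {set 'I_n + 'I_r}) :
  (forall Phi, \sum_(i in S) s i * prodvec (z i) Phi = 0) -> S = set0 \/ S = setT.
Proof.
move=> S0.
have SC0 Phi : \sum_(i in ~: S) s i * prodvec (z i) Phi = 0.
  rewrite -[RHS](sum_join_eq0 Phi) [RHS](bigID (mem S)) /= S0 add0r.
  by apply: eq_bigl => i; rewrite inE.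
have AB := sum_join_split S0; have := sum_join_split SC0; rewrite !preimsetC => AcBc.
have [A0|A_neq0] := eqVneq (inl @^-1: S) set0.
  left; apply: (preimset_sum_eq0 A0); apply: subsum_ys_eq0 => Phi.
  by rewrite -AB A0 big_set0.
have [AT|A_neqT] := eqVneq (inl @^-1: S) setT.
  right; apply: setC_inj; rewrite setCT; apply: preimset_sum_eq0.
    by rewrite preimsetC AT setCT.
  by rewrite preimsetC; apply: subsum_ys_eq0 => Phi; rewrite -AcBc AT setCT big_set0.
have Ac_neqT : ~: (inl @^-1: S) != setT.
  by apply: contra_neq A_neq0 => AcT; rewrite -[LHS]setCK AcT setCT.
exfalso; have := subsum_card_le AB A_neqT; have := subsum_card_le AcBc Ac_neqT.
have := cardsC (inl @^-1: S); have := cardsC (inr @^-1: S); rewrite !card_ord.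
move: #|inl @^-1: S| #|~: inl @^-1: S| #|inr @^-1: S| #|~: inr @^-1: S|; lia.
Qed.

End RankDecomposition.

Theorem theorem4 (F : fieldType) (n m r : nat) (V : 'I_m -> lmodType F)
  (x : 'I_n -> forall j : 'I_m, V j) :
  (2 <= n)%N -> (1 <= m)%N -> (r <= n - 2)%N ->
  (forall a j, x a j != 0) ->
  (forall j : 'I_m, span_dim_ge2 (fun a : 'I_n => x a j)) ->
  tensor_rank_eq (fun phi => \sum_(a < n) prodvec (x a) phi) r ->
  (forall Gamma : {set 'I_n}, (r.+1 <= #|Gamma|)%N -> (#|Gamma| <= n - 1)%N ->
     tensor_rank_ge (fun phi => \sum_(a in Gamma) prodvec (x a) phi) r.+1) ->
  (m + 2 <= n + r)%N.
Proof.
move=> n_ge2 m_gt0 r_le x_neq0 x_span [[ys [ys_neq0 ys_sum]] rank_min] subsum_rank.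
have sum_eq Phi : \sum_a prodvec (x a) Phi = \sum_k prodvec (ys k) Phi.
  exact: (congr1 (fun t => t Phi) ys_sum).
have z_neq0 i j : sum_join x ys i j != 0.
  by case: i => [a|k]; [exact: x_neq0 | exact: ys_neq0].
have s_neq0 (i : 'I_n + 'I_r) : sum_join (fun=> 1) (fun=> -1) i != 0 :> F.
  by case: i => ? /=; rewrite ?oppr_eq0 oner_eq0.
have ncol j : ~ collinear (fun i => sum_join x ys i j).
  move=> [v line]; apply: (span_dim_ge2_ncollinear (x_span j)).
  by exists v => a; exact: line (inl a).
have := vanishing_sum_length z_neq0 s_neq0 (sum_join_eq0 sum_eq)
  (sum_join_minimal n_ge2 r_le x_neq0 ys_neq0 sum_eq rank_min subsum_rank) ncol m_gt0.
by rewrite card_sum !card_ord.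
Qed.
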